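(* There exist a CSS code $\mathcal C$ on $n$ qupits and a partition $\{1,\dots,n\}=A\sqcup B$ for which $ST_B(\mathcal C)\subsetneq \mathcal C_B$.
   Context: A qupit is $\mathbb{C}^p$, $p$ prime, with basis $\{|a\rangle:a\in\mathbb{Z}_p\}$, and $\mathcal F|a\rangle=\frac1{\sqrt p}\sum_be^{2\pi iab/p}|b\rangle$. For $U\le\mathbb{Z}_p^n$, $U^{(q)}=\mathrm{span}\{|\mathbf u\rangle:\mathbf u\in U\}$. A CSS code is $\mathcal C=V^{(q)}\cap\mathcal F^{\otimes n}W^{(q)}$ for linear codes $V,W\le\mathbb{Z}_p^n$ with $V^\perp\subseteq W$. For $B\subseteq\{1,\dots,n\}$, $V_B=\{\mathbf v:\exists\mathbf w\in V,\ \mathrm{supp}(\mathbf v-\mathbf w)\subseteq B\}$, $W_B$ is defined similarly, and $\mathcal C_B=V_B^{(q)}\cap\mathcal F^{\otimes n}W_B^{(q)}$. A mixed state $\rho'$ is ''in'' $\mathcal C$ if $\mathrm{Tr}(P_{\mathcal C}\rho')=1$. $ST_B(\mathcal C)=\{\rho:\exists\rho'\text{ in }\mathcal C,\ \mathrm{Tr}_B(\rho)=\mathrm{Tr}_B(\rho')\}$, where $\mathcal H=\mathcal H_A\otimes\mathcal H_B$ with $\mathcal H_A,\mathcal H_B$ the qupits in positions $A$ and $B$. *)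

(* Complex numbers are R[i] (mathcomp-real-closed) for a
   realType R (mathcomp-reals); Stdlib's R is such an R, so R[i] is C. *)
From HB Require Import structures.
From mathcomp Require Import all_boot all_order all_algebra all_field.
From mathcomp Require Import reals complex.
Set Implicit Arguments. Unset Strict Implicit. Unset Printing Implicit Defensive.
Import Order.TTheory GRing.Theory Num.Theory.
Local Open Scope ring_scope.

Section QuditDefs.
Variable (C : numClosedFieldType) (p n : nat).

(* Z_p^n : row vectors over 'F_p; basis index of the n-qupit space. *)
Definition vecT := 'rV['F_p]_n.

(* Vectors (kets) of (C^p)^{⊗ n} and operators on it, written in the
   computational basis {|u> : u in Z_p^n}. *)
Definition ket := vecT -> C.
Definition oper := vecT -> vecT -> C.

Definition dotp (a b : vecT) : 'F_p := \sum_(i < n) a 0 i * b 0 i.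

(* omega = e^{2 pi i / p}:  p.-root (-1) = e^{i pi / p} (minimal argument) *)
Definition omega : C := (p.-root (-1)) ^+ 2.

Definition Fn (phi : ket) : ket :=
  fun b => (sqrtC (p%:R) ^+ n)^-1 *
           \sum_(a : vecT) omega ^+ (nat_of_ord (dotp a b)) * phi a.

(* U^{(q)} = span {|u> : u in U} *)
Definition qspan (U : pred vecT) (psi : ket) : Prop :=
  forall u, ~~ U u -> psi u = 0.

Definition css_space (V W : pred vecT) (psi : ket) : Prop :=
  qspan V psi /\ exists phi, qspan W phi /\ psi = Fn phi.

Definition dual (V : {vspace vecT}) : pred vecT :=
  fun u => [forall v : vecT, (v \in V) ==> (dotp u v == 0)].

Definition supp (v : vecT) : {set 'I_n} := [set i | v 0 i != 0].

Definition extB (B : {set 'I_n}) (V : {vspace vecT}) : pred vecT :=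
  fun v => [exists w : vecT, (w \in V) && (supp (v - w) \subset B)].

Definition opmul (X Y : oper) : oper := fun u v => \sum_w X u w * Y w v.
Definition optr (X : oper) : C := \sum_u X u u.
Definition opapp (X : oper) (psi : ket) : ket := fun u => \sum_v X u v * psi v.

Definition density (rho : oper) : Prop :=
  (forall u v, rho v u = (rho u v)^*) /\
  (forall x : ket, 0 <= \sum_u \sum_v (x u)^* * rho u v * x v) /\
  optr rho = 1.

Definition orth_proj_onto (S : ket -> Prop) (P : oper) : Prop :=
  (forall u v, P v u = (P u v)^*) /\ opmul P P = P /\
  (forall psi, S psi <-> exists phi, opapp P phi = psi).

Definition state_in (S : ket -> Prop) (rho : oper) : Prop :=
  density rho /\ exists P, orth_proj_onto S P /\ optr (opmul P rho) = 1.

(* H = H_A ⊗ H_B, A = complement of B; H_A indexed by vectors supported in A *)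
Definition projA (B : {set 'I_n}) (x : vecT) : vecT :=
  \row_i (if i \in B then 0 else x 0 i).

Definition ptrB (B : {set 'I_n}) (rho : oper) : oper :=
  fun x y => \sum_(z : vecT | supp z \subset B) rho (projA B x + z) (projA B y + z).

Definition ST (B : {set 'I_n}) (S : ket -> Prop) (rho : oper) : Prop :=
  density rho /\ exists rho', state_in S rho' /\ ptrB B rho = ptrB B rho'.

End QuditDefs.

From HB Require Import structures.
From mathcomp Require Import all_boot all_order all_algebra all_field.
From mathcomp Require Import reals complex.
From mathcomp Require Import ring.
From Stdlib Require Import FunctionalExtensionality.
Set Implicit Arguments. Unset Strict Implicit. Unset Printing Implicit Defensive.
Import Order.TTheory GRing.Theory Num.Theory.
Local Open Scope ring_scope.

(* Take p = n = 2, V = W = span{(1,1)} (a self-dual code) and B the second qubit.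
   Then V_B = W_B = Z_2^2, so C_B is the whole space and contains every state,
   whereas C is the line spanned by the Bell vector Phi = |00> + |11>, whose
   projector is Phi Phi^* / 2; hence every state rho' in C has <Phi|rho'|Phi> = 2.
   If moreover Tr_B rho' = Tr_B |00><00| = |0><0|, then <00|rho'|00> <= 1 and
   <11|rho'|11> = 0, and positivity of rho' on |00> - 2|11> gives the contradiction
   3 <00|rho'|00> >= 4.  So |00><00| is in C_B but not in ST_B(C). *)

Section Operators.
Context {C : numClosedFieldType} {p n : nat}.
Implicit Types (S : ket C p n -> Prop) (X P rho : oper C p n) (phi psi : ket C p n).

Definition delta (w : vecT p n) : ket C p n := fun u => (u == w)%:R.
Definition idop : oper C p n := fun u v => (u == v)%:R.
Definition pure (w : vecT p n) : oper C p n := fun u v => ((u == w) && (v == w))%:R.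

Lemma sum_eq_natl (w : vecT p n) (f : vecT p n -> C) :
  \sum_u (u == w)%:R * f u = f w.
Proof.
rewrite (bigD1 w) //= eqxx mul1r big1 ?addr0 // => u /negbTE ->.
by rewrite mul0r.
Qed.

Lemma sum_eq_natr (w : vecT p n) (f : vecT p n -> C) :
  \sum_u f u * (u == w)%:R = f w.
Proof. by rewrite -[RHS](sum_eq_natl w); apply: eq_bigr => u _; rewrite mulrC. Qed.

Lemma opapp_delta X w : opapp X (delta w) = fun u => X u w.
Proof. by apply: functional_extensionality => u; rewrite /opapp sum_eq_natr. Qed.

Lemma opapp1 phi : opapp idop phi = phi.
Proof.
apply: functional_extensionality => u; rewrite /opapp -[RHS](sum_eq_natl u).
by apply: eq_bigr => v _; rewrite /idop eq_sym.
Qed.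

Lemma opmul1 X : opmul idop X = X.
Proof.
apply: functional_extensionality => u; apply: functional_extensionality => v.
by rewrite -[RHS](congr1 (fun f => f u) (opapp1 (X^~ v))).
Qed.

Lemma orth_proj_col S P : orth_proj_onto S P -> forall v, S (fun u => P u v).
Proof. by case=> _ [_ hS] v; apply/hS; exists (delta v); rewrite opapp_delta. Qed.

Lemma density_diag_ge0 rho : density rho -> forall w, 0 <= rho w w.
Proof.
case=> _ [psd _] w; have := psd (delta w).
rewrite /delta (eq_bigr (fun u => (u == w)%:R * \sum_v rho u v * (v == w)%:R)).
  by rewrite sum_eq_natl sum_eq_natr.
by move=> u _; rewrite mulr_sumr; apply: eq_bigr => v _; rewrite rmorph_nat mulrA.
Qed.

Lemma orth_proj_full S : (forall psi, S psi) -> orth_proj_onto S idop.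
Proof.
move=> hS; split; first by move=> u v; rewrite /idop eq_sym rmorph_nat.
split; first exact: opmul1.
by move=> psi; split=> // _; exists psi; rewrite opapp1.
Qed.

Lemma state_in_full S rho : (forall psi, S psi) -> density rho -> state_in S rho.
Proof.
move=> hS hrho; split=> //; exists idop; split; first exact: orth_proj_full.
by rewrite opmul1; case: hrho => _ [].
Qed.

Lemma density_pure w : density (pure w).
Proof.
split; first by move=> u v; rewrite /pure andbC rmorph_nat.
split.
  move=> x; rewrite (bigD1 w) //= [X in _ + X]big1 => [|u /negbTE uw]; last first.
    by rewrite big1 // => v _; rewrite /pure uw mulr0 mul0r.
  rewrite addr0 (bigD1 w) //= big1 => [|v /negbTE vw]; last first.
    by rewrite /pure vw andbF mulr0 mul0r.
  by rewrite addr0 /pure eqxx mulr1 mulrC mul_conjC_ge0.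
rewrite /optr -[RHS](sum_eq_natl w (fun _ => 1)).
by apply: eq_bigr => u _; rewrite /pure andbb mulr1.
Qed.

End Operators.

Lemma F2_cases (x : 'F_2) : x = 0 \/ x = 1.
Proof. by case: x => [[|[|k]] Hk] //=; [left|right]; apply/eqP. Qed.

Lemma sum_F2 (V : nmodType) (f : 'F_2 -> V) : \sum_(x : 'F_2) f x = f 0 + f 1.
Proof.
rewrite big_ord_recr big_ord_recr big_ord0 /= add0r.
by congr (f _ + f _); apply/eqP.
Qed.

Lemma ord2_cases (i : 'I_2) : i = ord0 \/ i = ord_max.
Proof. by case: i => [[|[|k]] Hk] //=; [left|right]; apply/val_inj. Qed.

Lemma F2_add11 : (1 : 'F_2) + 1 = 0.
Proof. exact/eqP. Qed.

Definition bits (a b : 'F_2) : vecT 2 2 := \row_(i < 2) if i == ord0 then a else b.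

Lemma bitsE (v : vecT 2 2) : v = bits (v 0 ord0) (v 0 ord_max).
Proof.
by apply/rowP => i; rewrite mxE; case: (ord2_cases i) => ->.
Qed.

Lemma bits_eq a b c d : (bits a b == bits c d) = (a == c) && (b == d).
Proof.
apply/eqP/andP => [e | [/eqP -> /eqP ->] //].
have := congr1 (fun v : vecT 2 2 => (v 0 ord0, v 0 ord_max)) e.
by rewrite /= !mxE /= => -[-> ->].
Qed.

Lemma addbits a b c d : bits a b + bits c d = bits (a + c) (b + d).
Proof. by apply/rowP => i; rewrite !mxE; case: ifP. Qed.

Lemma oppbits a b : - bits a b = bits (- a) (- b).
Proof. by apply/rowP => i; rewrite !mxE; case: ifP. Qed.

Lemma scalebits k a b : k *: bits a b = bits (k * a) (k * b).
Proof. by apply/rowP => i; rewrite !mxE; case: ifP. Qed.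

Lemma dotp_bits a b c d : dotp (bits a b) (bits c d) = a * c + b * d.
Proof. by rewrite /dotp big_ord_recr big_ord_recr big_ord0 /= !mxE /= add0r. Qed.

Lemma sum_bits (V : nmodType) (f : vecT 2 2 -> V) :
  \sum_v f v = f (bits 0 0) + f (bits 0 1) + f (bits 1 0) + f (bits 1 1).
Proof.
rewrite (reindex (fun ab : 'F_2 * 'F_2 => bits ab.1 ab.2)) /=; last first.
  apply: onW_bij; exists (fun v : vecT 2 2 => (v 0 ord0, v 0 ord_max)).
    by case=> a b; rewrite /= !mxE.
  by move=> v; rewrite -bitsE.
by rewrite -(pair_big xpredT xpredT (fun a b => f (bits a b))) /= !sum_F2 addrA.
Qed.

Definition rep2 : {vspace vecT 2 2} := <[bits 1%R 1%R]>%VS.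

Lemma mem_rep2 a b : (bits a b \in rep2) = (a == b).
Proof.
apply/vlineP/eqP => [[k] | ->]; last by exists b; rewrite scalebits !mulr1.
by rewrite scalebits !mulr1 => /eqP; rewrite bits_eq => /andP [/eqP -> /eqP ->].
Qed.

Lemma dual_rep2 u : dual rep2 u -> u \in rep2.
Proof.
rewrite (bitsE u) mem_rep2 => /forallP /(_ (bits 1 1)).
rewrite mem_rep2 dotp_bits !mulr1 /=.
by case: (F2_cases (u 0 ord0)) => ->; case: (F2_cases (u 0 ord_max)) => ->.
Qed.

Definition Bsnd : {set 'I_2} := [set ord_max].

Lemma supp_bits_Bsnd a b : (supp (bits a b) \subset Bsnd) = (a == 0).
Proof.
apply/subsetP/eqP => [sub | -> i].
  apply/eqP/negPn/negP => a0.
  by have := sub ord0; rewrite !inE mxE /= => /(_ a0).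
by rewrite !inE mxE; case: (ord2_cases i) => ->; rewrite ?eqxx.
Qed.

Lemma projA_bits a b : projA Bsnd (bits a b) = bits a 0.
Proof. by apply/rowP => i; rewrite !mxE !inE; case: (ord2_cases i) => ->. Qed.

Lemma extB_rep2 v : extB Bsnd rep2 v.
Proof.
apply/existsP; exists (bits (v 0 ord0) (v 0 ord0)); rewrite mem_rep2 eqxx /=.
by rewrite {1}(bitsE v) oppbits addbits subrr supp_bits_Bsnd.
Qed.

Section TwoQubits.
Variable C : numClosedFieldType.

Lemma omega2 : omega C 2 = -1.
Proof. by rewrite /omega rootCK. Qed.

Lemma Fn_bits (phi : ket C 2 2) c d : Fn phi (bits c d) = 2^-1 * (phi (bits 0 0) +
  (-1) ^+ (nat_of_ord d) * phi (bits 0 1) + (-1) ^+ (nat_of_ord c) * phi (bits 1 0) +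
  (-1) ^+ (nat_of_ord (c + d)) * phi (bits 1 1)).
Proof. by rewrite /Fn sum_bits !dotp_bits omega2 sqrtCK !(mul0r, mul1r, add0r, addr0). Qed.

Lemma FnK (phi : ket C 2 2) : Fn (Fn phi) = phi.
Proof.
apply: functional_extensionality => v; rewrite (bitsE v).
have two_neq0 : (2 : C) != 0 by rewrite pnatr_eq0.
case: (F2_cases (v 0 ord0)) => ->; case: (F2_cases (v 0 ord_max)) => ->;
  rewrite !Fn_bits ?F2_add11 ?(add0r, addr0) /= ?expr0 ?expr1.
all: by field.
Qed.

Lemma css_extB_rep2 (psi : ket C 2 2) :
  css_space (extB Bsnd rep2) (extB Bsnd rep2) psi.
Proof.
split=> [u|]; first by rewrite extB_rep2.
by exists (Fn psi); split=> [u|]; rewrite ?extB_rep2 ?FnK.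
Qed.

Lemma ptrB_bits (rho : oper C 2 2) a b a' b' :
  ptrB Bsnd rho (bits a b) (bits a' b') =
  rho (bits a 0) (bits a' 0) + rho (bits a 1) (bits a' 1).
Proof.
rewrite /ptrB !projA_bits big_mkcond sum_bits !supp_bits_Bsnd /= !addbits.
by rewrite !addr0 !add0r.
Qed.

Lemma css_rep2_bell (psi : ket C 2 2) : css_space (mem rep2) (mem rep2) psi ->
  [/\ psi (bits 0 1) = 0, psi (bits 1 0) = 0 & psi (bits 1 1) = psi (bits 0 0)].
Proof.
case=> V_psi [phi [W_phi psiE]]; split; try by apply: V_psi; rewrite /= mem_rep2.
rewrite psiE !Fn_bits F2_add11 /= !expr0 !expr1.
by rewrite (W_phi (bits 0 1)) ?(W_phi (bits 1 0)) /= ?mem_rep2 // !mulr0 !addr0.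
Qed.

Definition bell (u : vecT 2 2) : bool := (u == bits 0 0) || (u == bits 1 1).

Definition bell_op (c : C) : oper C 2 2 := fun u v => (bell u && bell v)%:R * c.

Lemma bell_projE (P : oper C 2 2) :
  orth_proj_onto (css_space (mem rep2) (mem rep2)) P ->
  P = bell_op (P (bits 0 0) (bits 0 0)).
Proof.
move=> hP; have col v := css_rep2_bell (orth_proj_col hP v).
have [herm _] := hP.
have P01_ v : P (bits 0 1) v = 0 by case: (col v).
have P10_ v : P (bits 1 0) v = 0 by case: (col v).
have P11_ v : P (bits 1 1) v = P (bits 0 0) v by case: (col v).
have P_01 u : P u (bits 0 1) = 0 by rewrite herm P01_ rmorph0.
have P_10 u : P u (bits 1 0) = 0 by rewrite herm P10_ rmorph0.
have P_11 u : P u (bits 1 1) = P u (bits 0 0) by rewrite !(herm _ u) P11_.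
apply: functional_extensionality => u; apply: functional_extensionality => v.
rewrite /bell_op (bitsE u) (bitsE v).
case: (F2_cases (u 0 ord0)) => ->; case: (F2_cases (u 0 ord_max)) => ->;
case: (F2_cases (v 0 ord0)) => ->; case: (F2_cases (v 0 ord_max)) => ->;
by rewrite ?(P01_, P10_, P11_, P_01, P_10, P_11) /bell !bits_eq /= ?(mul1r, mul0r).
Qed.

Lemma trace_bell_op (c : C) (rho : oper C 2 2) :
  optr (opmul (bell_op c) rho) = c *
    (rho (bits 0 0) (bits 0 0) + rho (bits 0 0) (bits 1 1) +
     rho (bits 1 1) (bits 0 0) + rho (bits 1 1) (bits 1 1)).
Proof. by rewrite /optr /opmul !sum_bits /bell_op /bell !bits_eq /=; ring. Qed.

Lemma bell_op_idem (c : C) :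
  opmul (bell_op c) (bell_op c) = bell_op c -> c * (1 - 2 * c) = 0.
Proof.
move/(congr1 (fun X => X (bits 0 0) (bits 0 0))).
rewrite /opmul sum_bits /bell_op /bell !bits_eq /= => e.
by rewrite -[RHS](subrr (1 * c)) -{2}e; ring.
Qed.

Lemma state_in_rep2_bell (rho : oper C 2 2) :
  state_in (css_space (mem rep2) (mem rep2)) rho ->
  rho (bits 0 0) (bits 0 0) + rho (bits 0 0) (bits 1 1) +
  rho (bits 1 1) (bits 0 0) + rho (bits 1 1) (bits 1 1) = 2.
Proof.
case=> _ [P [hP htr]]; have [_ [idem _]] := hP.
rewrite (bell_projE hP) trace_bell_op in htr; rewrite (bell_projE hP) in idem.
move: htr (bell_op_idem idem); set c := P (bits 0 0) (bits 0 0) => htr hc.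
have c_neq0 : c != 0.
  by apply/eqP => c0; move: htr; rewrite c0 mul0r => /eqP; rewrite eq_sym oner_eq0.
have two_c : 1 = 2 * c.
  by apply: subr0_eq; move/eqP: hc; rewrite mulf_eq0 (negbTE c_neq0) => /eqP.
by rewrite -[LHS]mul1r {1}two_c -mulrA htr mulr1.
Qed.

Lemma pure00_notin_ST :
  ~ ST Bsnd (css_space (mem rep2) (mem rep2)) (pure (bits 0 0) : oper C 2 2).
Proof.
case=> _ [rho [rho_in hpt]]; have sum2 := state_in_rep2_bell rho_in.
have [hrho _] := rho_in; have [_ [psd _]] := hrho.
have pt u := congr1 (fun X => X u u) hpt.
have := pt (bits 0 0); have := pt (bits 1 0).
rewrite !ptrB_bits /pure !bits_eq /= mulr0n mulr1n !add0r addr0.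
have := psd (fun u => if u == bits 0 0 then 1 else if u == bits 1 1 then -2 else 0).
rewrite !sum_bits !bits_eq /= rmorph0 rmorph1 rmorphN rmorph_nat.
move: sum2.
set a00 := rho (bits 0 0) (bits 0 0); set a01 := rho (bits 0 1) (bits 0 1).
set a10 := rho (bits 1 0) (bits 1 0); set a11 := rho (bits 1 1) (bits 1 1).
set b := rho (bits 0 0) (bits 1 1); set b' := rho (bits 1 1) (bits 0 0).
move=> sum2 test pt1 pt0.
have ea00 : a00 = 1 - a01 by rewrite pt0 addrK.
have ea11 : a11 = - a10 by apply/eqP; rewrite -addr_eq0 addrC -pt1.
have eb' : b' = 2 - a00 - b - a11 by rewrite -sum2; ring.
rewrite [X in 0 <= X](_ : _ = - (1 + (3 * a01 + 6 * a10))) in test; last first.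
  by rewrite eb' ea00 ea11; ring.
have a01_ge0 := density_diag_ge0 hrho (bits 0 1).
have a10_ge0 := density_diag_ge0 hrho (bits 1 0).
have : 1 <= 1 + (3 * a01 + 6 * a10) by rewrite lerDl addr_ge0 // mulr_ge0 // ler0n.
by rewrite oppr_ge0 in test; move/le_trans/(_ test); rewrite ler10.
Qed.

End TwoQubits.

Theorem mainTheorem10 (R : realType) :
  exists (p n : nat) (V W : {vspace vecT p n}) (B : {set 'I_n}),
    [/\ prime p,
        (forall u, dual V u -> u \in W),
        (forall rho, ST B (css_space (C:=R[i]) (mem V) (mem W)) rho ->
            state_in (css_space (extB B V) (extB B W)) rho) &
        (exists rho, state_in (css_space (C:=R[i]) (extB B V) (extB B W)) rho /\
            ~ ST B (css_space (mem V) (mem W)) rho)].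
Proof.
exists 2%N, 2%N, rep2, rep2, Bsnd; split.
- by [].
- exact: dual_rep2.
- by move=> rho [hrho _]; apply: state_in_full hrho; exact: css_extB_rep2.
- exists (pure (bits 0 0)); split; last exact: pure00_notin_ST.
  by apply: state_in_full (density_pure _); exact: css_extB_rep2.
Qed.
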